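(* For $k\in\{1,\dots,m\}$ let $A_k\in\mathbb{R}^n$ with $\|A_k\|>0$ and $b_k\in\mathbb{R}$, and let $f(X)=\max_{k\in\{1,\dots,m\}}\left(A_k^TX+b_k\right)$. Let $X_0\in\mathbb{R}^n$ and $R>0$ be such that for all $X$ in the open ball $B(X_0,R)$: (1) $0\notin\partial f(X)$, and (2) every $d_X\in\partial f(X)$ satisfies $\|d_X\|\ge\underline{d}$, where $\underline{d}>0$ is a fixed constant. Then there exists $X\in B(X_0,R)$ such that $$f(X)\le f(X_0)-\underline{d}\cdot\frac{R}{2}.$$
   Context: $\partial f(X)$ denotes the subdifferential of the convex function $f$ at $X$. The function $f$ is the standing function of the paper's section, the maximum of the affine functions $A_k^TX+b_k$. *)

From HB Require Import structures.
From mathcomp Require Import all_boot all_order all_algebra.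
From mathcomp Require Import reals.
Set Implicit Arguments. Unset Strict Implicit. Unset Printing Implicit Defensive.
Import Order.TTheory GRing.Theory Num.Theory.
Local Open Scope ring_scope.

Definition dotv (R : realType) (n : nat) (u v : 'rV[R]_n) : R :=
  \sum_(i < n) u ord0 i * v ord0 i.

Definition enorm (R : realType) (n : nat) (u : 'rV[R]_n) : R :=
  Num.sqrt (dotv u u).

(* f(X) = max_{k in {1..m}} (A_k^T X + b_k); indices k : 'I_m.+1, i.e. m.+1 >= 1 pieces. *)
Definition pwmax (R : realType) (n m : nat) (A : 'I_m.+1 -> 'rV[R]_n)
  (b : 'I_m.+1 -> R) (X : 'rV[R]_n) : R :=
  \big[Num.max/(dotv (A ord0) X + b ord0)]_(k < m.+1) (dotv (A k) X + b k).

Definition subdiff (R : realType) (n : nat) (f : 'rV[R]_n -> R) (X : 'rV[R]_n)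
  (g : 'rV[R]_n) : Prop :=
  forall Y : 'rV[R]_n, f X + dotv g (Y - X) <= f Y.

(* Minimise the proximal objective f(Z) + c‖Z - X0‖² with c = d/r, where d is the
   lower bound on subgradients; a minimiser Y exists because f is continuous and
   bounded below by one of its affine pieces.  Optimality of Y makes 2c(X0 - Y) a
   subgradient of f at Y, and testing it at X0 gives f(Y) ≤ f(X0) - 2c‖Y - X0‖².
   If Y lies in the ball, ‖2c(X0 - Y)‖ ≥ d forces ‖Y - X0‖ ≥ r/2, so Y itself
   descends by dr/2; otherwise the point of the segment [X0, Y] at distance r/2
   from X0 does, by convexity. *)
From HB Require Import structures.
From mathcomp Require Import all_boot all_order all_algebra.
From mathcomp Require Import reals.
From mathcomp Require Import all_classical all_reals all_analysis.
From mathcomp Require Import ring lra.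
Import Order.TTheory GRing.Theory Num.Theory.
Import numFieldNormedType.Exports.
Local Open Scope classical_set_scope.
Local Open Scope ring_scope.

Section InnerProduct.
Context {R : realType} {n : nat}.
Implicit Types (u v w : 'rV[R]_n) (a : R).

Lemma dotvC u v : dotv u v = dotv v u.
Proof. by apply: eq_bigr => i _; rewrite mulrC. Qed.

Lemma dotvDl u v w : dotv (u + v) w = dotv u w + dotv v w.
Proof. by rewrite /dotv -big_split; apply: eq_bigr => i _; rewrite mxE mulrDl. Qed.

Lemma dotvZl a u v : dotv (a *: u) v = a * dotv u v.
Proof. by rewrite /dotv mulr_sumr; apply: eq_bigr => i _; rewrite mxE mulrA. Qed.

Lemma dotvNl u v : dotv (- u) v = - dotv u v.
Proof. by rewrite -scaleN1r dotvZl mulN1r. Qed.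

Lemma dotvDr u v w : dotv u (v + w) = dotv u v + dotv u w.
Proof. by rewrite dotvC dotvDl !(dotvC u). Qed.

Lemma dotvZr a u v : dotv u (a *: v) = a * dotv u v.
Proof. by rewrite dotvC dotvZl dotvC. Qed.

Lemma dotvNr u v : dotv u (- v) = - dotv u v.
Proof. by rewrite dotvC dotvNl dotvC. Qed.

Lemma dotvBr u v w : dotv u (v - w) = dotv u v - dotv u w.
Proof. by rewrite dotvDr dotvNr. Qed.

Lemma dotv_ge0 u : 0 <= dotv u u.
Proof. by apply: sumr_ge0 => i _; rewrite -expr2 sqr_ge0. Qed.

Lemma enorm_ge0 u : 0 <= enorm u.
Proof. exact: sqrtr_ge0. Qed.

Lemma sqr_enorm u : enorm u ^+ 2 = dotv u u.
Proof. by rewrite sqr_sqrtr // dotv_ge0. Qed.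

Lemma enormZ a u : enorm (a *: u) = `|a| * enorm u.
Proof. by rewrite /enorm dotvZl dotvZr mulrA -expr2 sqrtrM ?sqr_ge0 // sqrtr_sqr. Qed.

Lemma enormN u : enorm (- u) = enorm u.
Proof. by rewrite -scaleN1r enormZ normrN1 mul1r. Qed.

Lemma continuous_dotv u : continuous (dotv u).
Proof.
apply: (@continuous_big R _ +%R 0 xpredT add_continuous) => i _ x.
by apply: continuousM; [exact: cst_continuous | exact: coord_continuous].
Qed.

Lemma continuous_dotvv : continuous (fun u : 'rV[R]_n => dotv u u).
Proof.
apply: (@continuous_big R _ +%R 0 xpredT add_continuous) => i _ x.
by apply: continuousM; exact: coord_continuous.
Qed.

Lemma dotv_quadratic_ge_coord v u j c : 0 < c ->
  c * (u ord0 j + v ord0 j / (2 * c)) ^+ 2 - \sum_(i < n) v ord0 i ^+ 2 / (4 * c)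
    <= dotv v u + c * dotv u u.
Proof.
(* Complete the square in each coordinate, then drop all squares but the j-th. *)
move=> c_gt0; pose y i := u ord0 i + v ord0 i / (2 * c).
have -> : dotv v u + c * dotv u u =
    c * \sum_(i < n) y i ^+ 2 - \sum_(i < n) v ord0 i ^+ 2 / (4 * c).
  rewrite /dotv !mulr_sumr -big_split -sumrB; apply: eq_bigr => i _.
  by rewrite /y /=; field; rewrite gt_eqF // mulr_gt0.
rewrite lerD2r ler_pM2l // (bigD1 j) //= lerDl.
by apply: sumr_ge0 => i _; exact: sqr_ge0.
Qed.

End InnerProduct.

Lemma ler_of_small_slack (R : realFieldType) (x y e : R) : 0 <= e ->
  (forall s, 0 < s <= 1 -> x <= y + s * e) -> x <= y.
Proof.
move=> e_ge0 slack; rewrite leNgt; apply/negP => yx.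
pose s := (x - y) / (x - y + e).
have s_gt0 : 0 < s by rewrite divr_gt0 ?subr_gt0 //; lra.
have s_le1 : s <= 1 by rewrite ler_pdivrMr ?mul1r; lra.
have s_def : s * (x - y + e) = x - y by rewrite mulfVK // gt_eqF //; lra.
have := slack s; rewrite s_gt0 s_le1 => /(_ isT).
have : 0 < s * (x - y) by rewrite mulr_gt0 ?subr_gt0.
nra.
Qed.

Lemma continuous_bigmax (R : realType) (T : topologicalType) (I : Type)
    (r : seq I) (g : T -> R) (F : I -> T -> R) :
  continuous g -> (forall i, continuous (F i)) ->
  continuous (fun x => \big[Num.max/g x]_(i <- r) F i x).
Proof.
move=> g_cont F_cont; elim: r => [|i r IHr].
  by under [X in continuous X]funext do rewrite big_nil.
under [X in continuous X]funext do rewrite big_cons.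
exact: (max_fun_continuous (F_cont i) IHr).
Qed.

Lemma coercive_continuous_min (R : realType) (n : nat) (g : 'rV[R]_n -> R)
    (P : 'rV[R]_n) (K c : R) :
  0 < c -> continuous g ->
  (forall (Z : 'rV[R]_n) j, K + c * (Z ord0 j - P ord0 j) ^+ 2 <= g Z) ->
  exists Y, forall Z, g Y <= g Z.
Proof.
move=> c_gt0 g_cont g_ge.
pose M := 1 + `|g P - K| / c.
have M_ge1 : 1 <= M by rewrite lerDl divr_ge0 // ltW.
have gP_le : g P <= K + c * M.
  have : `|g P - K| / c <= M by rewrite lerDr.
  by rewrite ler_pdivrMr // mulrC => /(le_trans (ler_norm _)); lra.
pose I i := `[P ord0 i - M, P ord0 i + M]%classic.
pose box := [set v : 'rV[R]_n | forall i, I i (v ord0 i)].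
(* Outside the box some coordinate gives g Z > K + c M >= g P. *)
have P_box : box P by move=> i; rewrite /I /= in_itv /=; apply/andP; split; lra.
have [Y _ Y_min] : exists2 Y, Y \in box & forall Z, Z \in box -> g Y <= g Z.
  apply: EVT_min_rV; first by exists P.
    by apply: (@rV_compact _ _ I) => i; exact: segment_compact.
  exact: continuous_subspaceT.
exists Y => Z; have [Z_box | /existsNP[j Zj_out]] := pselect (box Z).
  by apply: Y_min; rewrite inE.
have M_lt : M < `|Z ord0 j - P ord0 j|.
  rewrite ltNge; apply: contra_notN Zj_out; rewrite /I /= in_itv /= ler_norml.
  by move=> /andP[? ?]; apply/andP; split; lra.
have : c * M < c * (Z ord0 j - P ord0 j) ^+ 2.
  by rewrite ltr_pM2l // -real_normK ?num_real // expr2; nra.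
have := g_ge Z j; have := Y_min P; rewrite inE => /(_ P_box); lra.
Qed.

Section Proximal.
Context {R : realType} {n : nat} (f : 'rV[R]_n -> R).
Implicit Types (X Y Z : 'rV[R]_n) (c : R).

Definition convex_fun := forall X Z s, 0 <= s <= 1 ->
  f (X + s *: (Z - X)) <= (1 - s) * f X + s * f Z.

Definition prox_objective c X0 Z := f Z + c * dotv (Z - X0) (Z - X0).

Lemma prox_subgradient {c X0 Y} : convex_fun -> 0 < c ->
    (forall Z, prox_objective c X0 Y <= prox_objective c X0 Z) ->
  subdiff f Y ((2 * c) *: (X0 - Y)).
Proof.
(* Compare Y with Y + s(Z - Y), divide by s and let s go to 0. *)
move=> f_cvx c_gt0 Y_min Z.
rewrite -opprB scalerN dotvNl dotvZl.
apply: (@ler_of_small_slack _ _ _ (c * dotv (Z - Y) (Z - Y))).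
  by apply: mulr_ge0; [exact: ltW | exact: dotv_ge0].
move=> s /andP[s_gt0 s_le1].
have := f_cvx Y Z s; rewrite ltW //= s_le1 => /(_ isT).
have := Y_min (Y + s *: (Z - Y)); rewrite /prox_objective addrAC.
move: (f (Y + s *: (Z - Y))) (Y - X0) (Z - Y) => fS W D.
rewrite !(dotvDl, dotvDr, dotvZl, dotvZr) (dotvC D W) => Y_le fS_le.
have : s * (f Y - 2 * c * dotv W D - f Z - s * (c * dotv D D)) <= 0 by nra.
by rewrite pmulr_rle0 //; lra.
Qed.

Lemma prox_decrease {c X0 Y} : convex_fun -> 0 < c ->
    (forall Z, prox_objective c X0 Y <= prox_objective c X0 Z) ->
  f Y + 2 * c * enorm (Y - X0) ^+ 2 <= f X0.
Proof.
move=> f_cvx c_gt0 Y_min.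
have := prox_subgradient f_cvx c_gt0 Y_min X0.
by rewrite dotvZl -sqr_enorm -enormN opprB.
Qed.

Lemma continuous_prox_objective c X0 : continuous f ->
  continuous (prox_objective c X0).
Proof.
move=> f_cont Z.
have sqdist_cont : {for Z, continuous (fun Y => dotv (Y - X0) (Y - X0))}.
  apply: (continuous_comp _ (continuous_dotvv _)).
  by apply: continuousB; [exact: cvg_id | exact: cst_continuous].
exact: (continuousD (f_cont Z) (continuousM (cvg_cst c) sqdist_cont)).
Qed.

Lemma prox_objective_min_exists {v beta} c X0 : continuous f ->
    (forall Z, dotv v Z + beta <= f Z) -> 0 < c ->
  exists Y, forall Z, prox_objective c X0 Y <= prox_objective c X0 Z.
Proof.
move=> f_cont f_ge c_gt0.
pose K := dotv v X0 + beta - \sum_(i < n) v ord0 i ^+ 2 / (4 * c).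
apply: (@coercive_continuous_min _ _ _ (X0 - (2 * c)^-1 *: v) K c c_gt0).
  exact: continuous_prox_objective.
move=> Z j.
have shift : Z ord0 j - (X0 - (2 * c)^-1 *: v) ord0 j =
    (Z - X0) ord0 j + v ord0 j / (2 * c) by rewrite !mxE; ring.
have := dotv_quadratic_ge_coord v (Z - X0) j c c_gt0.
rewrite dotvBr -shift; have := f_ge Z; rewrite /prox_objective /K; lra.
Qed.

Lemma prox_descent X0 r d Y : convex_fun -> 0 < r -> 0 < d ->
    (forall X, enorm (X - X0) < r -> forall g, subdiff f X g -> d <= enorm g) ->
    (forall Z, prox_objective (d / r) X0 Y <= prox_objective (d / r) X0 Z) ->
  exists X, enorm (X - X0) < r /\ f X <= f X0 - d * (r / 2).
Proof.
move=> f_cvx r_gt0 d_gt0 subgrad_ge Y_min.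
set c := d / r in Y_min.
have c_gt0 : 0 < c by rewrite divr_gt0.
have d_def : d = c * r by rewrite mulfVK ?gt_eqF.
have Y_dec := prox_decrease f_cvx c_gt0 Y_min.
have N_ge0 := enorm_ge0 (Y - X0).
move: Y_dec N_ge0; set N := enorm (Y - X0) => Y_dec N_ge0.
rewrite d_def; case: (ltP N r) => [N_lt_r | r_le_N].
- exists Y; split => //.
  have := subgrad_ge Y N_lt_r _ (prox_subgradient f_cvx c_gt0 Y_min).
  rewrite d_def enormZ -enormN opprB -/N ger0_norm => [r_le|]; last by lra.
  have half_r_le_N : r / 2 <= N by nra.
  nra.
- have N_gt0 : 0 < N by exact: lt_le_trans r_le_N.
  pose s := r / (2 * N).
  have sN : s * N = r / 2 by rewrite /s invfM mulrA mulfVK ?gt_eqF // mulrC.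
  have s_gt0 : 0 < s by rewrite divr_gt0 ?mulr_gt0.
  have s_le1 : s <= 1 by rewrite ler_pdivrMr ?mulr_gt0 //; lra.
  exists (X0 + s *: (Y - X0)); split.
    by rewrite addrC addKr enormZ ger0_norm ?ltW // -/N sN; lra.
  have := f_cvx X0 Y s; rewrite ltW //= s_le1 => /(_ isT) fX_le.
  have gain : s * (2 * c * N ^+ 2) = c * r * N by rewrite expr2; nra.
  have : s * f Y <= s * (f X0 - 2 * c * N ^+ 2) by rewrite ler_pM2l //; lra.
  nra.
Qed.

End Proximal.

Section PiecewiseMax.
Context {R : realType} {n m : nat} (A : 'I_m.+1 -> 'rV[R]_n) (b : 'I_m.+1 -> R).

Lemma pwmax_ge k X : dotv (A k) X + b k <= pwmax A b X.
Proof. exact: le_bigmax. Qed.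

Lemma convex_pwmax : convex_fun (pwmax A b).
Proof.
move=> X Z s /andP[s_ge0 s_le1].
have piece_le k : dotv (A k) (X + s *: (Z - X)) + b k <=
    (1 - s) * pwmax A b X + s * pwmax A b Z.
  rewrite dotvDr dotvZr dotvBr.
  have := pwmax_ge k X; have := pwmax_ge k Z; nra.
by apply: bigmax_le => [|k _]; exact: piece_le.
Qed.

Lemma continuous_pwmax : continuous (pwmax A b).
Proof.
by apply: continuous_bigmax => [|k] X;
  exact: continuousD (continuous_dotv _ X) (@cst_continuous _ _ _ X).
Qed.

End PiecewiseMax.

Theorem lemma2p3 (R : realType) (n m : nat)
  (A : 'I_m.+1 -> 'rV[R]_n) (b : 'I_m.+1 -> R)
  (X0 : 'rV[R]_n) (r dlow : R) :
  (forall k, 0 < enorm (A k)) ->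
  0 < r -> 0 < dlow ->
  (forall X, enorm (X - X0) < r -> ~ subdiff (pwmax A b) X 0) ->
  (forall X, enorm (X - X0) < r ->
     forall d, subdiff (pwmax A b) X d -> dlow <= enorm d) ->
  exists X, enorm (X - X0) < r /\
    pwmax A b X <= pwmax A b X0 - dlow * (r / 2).
Proof.
move=> _ r_gt0 d_gt0 _ subgrad_ge.
have [Y Y_min] := prox_objective_min_exists (pwmax A b) (dlow / r) X0
  (continuous_pwmax A b) (pwmax_ge A b ord0) (divr_gt0 d_gt0 r_gt0).
exact: prox_descent (convex_pwmax A b) r_gt0 d_gt0 subgrad_ge Y_min.
Qed.
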